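(* Let $d\in\mathbb{N}$, $\mathscr{a}\in\mathbb{R}$, $\mathscr{b}\in(\mathscr{a},\infty)$, for $u=(u_1,\dots,u_{d+1})\in\mathbb{R}^{d+1}$ let $I^u=\{x=(x_1,\dots,x_d)\in[\mathscr{a},\mathscr{b}]^d\colon u_{d+1}+\sum_{i=1}^d u_ix_i>0\}$, let $\lambda_d$ be the Lebesgue–Borel measure on $\mathbb{R}^d$, and let $v\in\mathbb{R}^{d+1}\setminus\{0\}$. Then $\limsup_{\mathbb{R}^{d+1}\ni u\to v}\lambda_d(I^u\,\Delta\, I^v)=0$.
   Context: $A\,\Delta\,B$ denotes the symmetric difference of sets $A$ and $B$. *)

From HB Require Import structures.
From mathcomp Require Import all_boot all_order all_algebra.
From mathcomp Require Import all_classical all_reals all_analysis.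
Set Implicit Arguments. Unset Strict Implicit. Unset Printing Implicit Defensive.
Import Order.TTheory GRing.Theory Num.Theory.
Import numFieldNormedType.Exports.
Local Open Scope classical_set_scope.
Local Open Scope ring_scope.

(* d-dimensional Lebesgue(-Borel) measure on R^d = d.-tuple R, given as the
   iterated (Tonelli) integral of the indicator function w.r.t. the
   one-dimensional Lebesgue measure [lebesgue_measure] of mathcomp-analysis.
   iter_int 0 f = f [tuple];
   iter_int n.+1 f = \int_x iter_int n (fun t => f (x :: t)) dx. *)
Fixpoint iter_int (R : realType) (n : nat) : (n.-tuple R -> \bar R) -> \bar R :=
  match n return (n.-tuple R -> \bar R) -> \bar R with
  | 0 => fun f => f [tuple]
  | n'.+1 => fun f =>
      (\int[@lebesgue_measure R]_(x in [set: R])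
          @iter_int R n' (fun t => f [tuple of (x : R) :: t]))%E
  end.

Definition lebesgue_d (R : realType) (d : nat) (A : set (d.-tuple R)) : \bar R :=
  iter_int (fun x => (\1_A x)%:E).

(* I^u = { x in [a,b]^d : u_{d+1} + sum_{i=1}^d u_i x_i > 0 },
   with u = (u_1,...,u_{d+1}) a row vector of length d+1
   (u_i = u 0 (i-1), u_{d+1} = u 0 ord_max). *)
Definition Iset (R : realType) (d : nat) (a b : R) (u : 'rV[R]_(d.+1))
  : set (d.-tuple R) :=
  [set x | (forall i : 'I_d, a <= tnth x i <= b) /\
           0 < u 0 ord_max + \sum_(i < d) u 0 (widen_ord (leqnSn d) i) * tnth x i].

From HB Require Import structures.
From mathcomp Require Import all_boot all_order all_algebra.
From mathcomp Require Import all_classical all_reals all_analysis.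
From mathcomp Require Import ring lra.
Import Order.TTheory GRing.Theory Num.Theory.
Import numFieldNormedType.Exports.
Set Implicit Arguments. Unset Strict Implicit. Unset Printing Implicit Defensive.
Local Open Scope classical_set_scope.
Local Open Scope ring_scope.

(* On the box [a, b]^d the affine form x |-> u_{d+1} + sum_i u_i x_i depends
   Lipschitz-continuously on u, with constant C = 1 + d (|a| + |b|) for the sup
   norm. So if |u - v| < delta, every point of I^u (symdiff) I^v, where the two
   forms have opposite signs, satisfies |v_{d+1} + sum_i v_i x_i| <= delta C: it
   lies in a slab around the hyperplane of v. As v <> 0 this slab is small: if
   some v_i <> 0 with i <= d, integrating x_i over an interval of length
   2 delta C / |v_i| and the other coordinates over [a, b] bounds its measure by
   (b - a)^(d-1) 2 delta C / |v_i|; otherwise v_{d+1} <> 0 and the slab is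
   empty for small delta. *)

(* Unlike [ge0_le_integral], no measurability is assumed: the integrands
   [x |-> lebesgue_d (tsection A x)] below are not known to be measurable. *)
Lemma ge0_le_integralT (d : measure_display) (T : measurableType d)
    (R : realType) (mu : {measure set T -> \bar R}) (f g : T -> \bar R) :
  (forall x, 0 <= f x)%E -> (forall x, f x <= g x)%E ->
  (\int[mu]_x f x <= \int[mu]_x g x)%E.
Proof.
move=> f0 fg; have g0 x : (0 <= g x)%E := le_trans (f0 x) (fg x).
rewrite !ge0_integralTE//; apply: ereal_sup_le => _ [h /= hf <-].
by exists h => //= x; exact: le_trans (hf x) (fg x).
Qed.

Lemma dnbhs_proper (K : numFieldType) (V : normedModType K) (x e : V) :
  e != 0 -> ProperFilter x^'.
Proof.
move=> e0; apply: Build_ProperFilter_ex => A /nbhs_ballP[r /= r0 xrA].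
have ne0 : 0 < `|e| by rewrite normr_gt0.
exists (x + (r / 2 / `|e|) *: e); apply: xrA.
  rewrite -ball_normE /ball_ /= opprD addrA subrr sub0r normrN normrZ.
  rewrite ger0_norm ?divfK ?gt_eqF ?divr_ge0 ?ltW //.
  by rewrite ltr_pdivrMr // ltr_pMr // ltr1n.
rewrite -subr_eq0 addrC addKr scaler_eq0 negb_or e0 andbT.
by rewrite !mulf_neq0 ?invr_neq0 ?gt_eqF.
Qed.

Lemma limf_esup_eq0 (T : choiceType) (X : filteredType T) (R : realType)
    (f : X -> \bar R) (F : set_system X) : ProperFilter F ->
  (forall x, (0 <= f x)%E) ->
  (forall eps : R, 0 < eps -> \forall x \near F, (f x <= eps%:E)%E) ->
  limf_esup f F = 0%E.
Proof.
move=> FF f0 f_small; apply/eqP; rewrite eq_le limf_esup_ge0 ?andbT//.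
apply/lee_addgt0Pr => eps /f_small Ff; rewrite add0e.
apply: le_trans (ereal_inf_lbound _) _; first by exists [set x | (f x <= eps%:E)%E].
by apply: ge_ereal_sup => _ [x fx <-].
Qed.

Lemma ler_norm_affine (R : realFieldType) (c w x eta : R) : w != 0 ->
  `|c + w * x| <= eta -> - c / w - eta / `|w| <= x <= - c / w + eta / `|w|.
Proof.
move=> w0 cwx; have : `|x + c / w| <= eta / `|w|.
  by rewrite ler_pdivlMr ?normr_gt0 // -normrM mulrDl divfK // addrC (mulrC x).
by rewrite ler_norml => /andP[? ?]; apply/andP; split; lra.
Qed.

Section lebesgue_d.
Variable R : realType.
Local Open Scope ereal_scope.

Definition tsection n (A : set (n.+1.-tuple R)) (x : R) : set (n.-tuple R) :=
  [set t : n.-tuple R | A [tuple of x :: t]].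

Lemma lebesgue_dS n (A : set (n.+1.-tuple R)) :
  lebesgue_d A = \int[@lebesgue_measure R]_x lebesgue_d (tsection A x).
Proof. by []. Qed.

Lemma lebesgue_d_ge0 n (A : set (n.-tuple R)) : 0 <= lebesgue_d A.
Proof.
elim: n A => [|n IH] A; first by rewrite /lebesgue_d /= lee_fin.
by rewrite lebesgue_dS; apply: integral_ge0 => x _.
Qed.

Lemma le_lebesgue_d n (A B : set (n.-tuple R)) :
  A `<=` B -> lebesgue_d A <= lebesgue_d B.
Proof.
elim: n A B => [|n IH] A B AB.
  rewrite /lebesgue_d /= lee_fin !indicE.
  by have [/set_mem/AB/mem_set->|] := boolP (_ \in A).
rewrite !lebesgue_dS; apply: ge0_le_integralT => x; first exact: lebesgue_d_ge0.
by apply: IH => t; apply: AB.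
Qed.

Lemma lebesgue_d_set0 n : lebesgue_d (set0 : set (n.-tuple R)) = 0.
Proof.
elim: n => [|n IH]; first by rewrite /lebesgue_d /= indic0.
rewrite lebesgue_dS; apply: integral0_eq => x _.
by rewrite -IH; congr lebesgue_d; apply/seteqP; split.
Qed.

Lemma integral_cst_indic_itv (K p q : R) : (0 <= K)%R -> (p <= q)%R ->
  \int[@lebesgue_measure R]_x (K * \1_`[p, q] x)%:E = (K * (q - p))%:E.
Proof.
move=> K0 pq; rewrite integralZl_indic//=; last by move=> /lt_geF; rewrite K0.
rewrite integral_indic//= setIT lebesgue_measure_itv/= lte_fin.
have [_|qp] := ltP p q; first by rewrite -EFinD -EFinM.
have -> : q = p by apply/le_anti/andP.
by rewrite subrr mulr0 mule0.
Qed.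

Lemma lebesgue_d_le_sections n (A : set (n.+1.-tuple R)) (K p q : R) :
  (0 <= K)%R -> (p <= q)%R ->
  (forall (x : R) (t : n.-tuple R), A [tuple of x :: t] -> (p <= x <= q)%R) ->
  (forall x, (p <= x <= q)%R -> lebesgue_d (tsection A x) <= K%:E) ->
  lebesgue_d A <= (K * (q - p))%:E.
Proof.
move=> K0 pq Apq AK; rewrite lebesgue_dS -integral_cst_indic_itv//.
apply: ge0_le_integralT => x; first exact: lebesgue_d_ge0.
rewrite indicE; have [/set_mem/=|xNpq] := boolP (x \in _).
  by rewrite in_itv/= mulr1; exact: AK.
rewrite mulr0; apply: le_trans (le_lebesgue_d (B := set0) _) _.
  move=> t /Apq xpq; apply/negP: xNpq; rewrite negbK.
  by apply/mem_set; rewrite /= in_itv.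
by rewrite lebesgue_d_set0.
Qed.
End lebesgue_d.

Section box_slab.
Variables (R : realType) (a b : R).
Hypothesis ab : a <= b.

Definition box n : set (n.-tuple R) := [set x | forall i, a <= tnth x i <= b].
Arguments box : clear implicits.

Definition slab n (c : R) (w : 'I_n -> R) (eta : R) : set (n.-tuple R) :=
  box n `&` [set x | `|c + \sum_(j < n) w j * tnth x j| <= eta].

Lemma box_cons n x (t : n.-tuple R) :
  box n.+1 [tuple of x :: t] <-> a <= x <= b /\ box n t.
Proof.
split=> [bxt|[ax bt] i]; first split.
- by have := bxt ord0; rewrite tnth0.
- by move=> j; have := bxt (lift ord0 j); rewrite tnthS.
- by case: (unliftP ord0 i) => [j ->|->]; rewrite ?tnthS ?tnth0.
Qed.

Lemma slab_cons n c (w : 'I_n.+1 -> R) eta x (t : n.-tuple R) :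
  slab c w eta [tuple of x :: t] <->
  a <= x <= b /\ slab (c + w ord0 * x) (fun j => w (lift ord0 j)) eta t.
Proof.
rewrite /slab /= big_ord_recl tnth0 addrA.
have -> : \sum_(j < n) w (lift ord0 j) * tnth [tuple of x :: t] (lift ord0 j) =
          \sum_(j < n) w (lift ord0 j) * tnth t j.
  by apply: eq_bigr => j _; rewrite tnthS.
by split=> [[/box_cons[ax bt] wt]|[ax [bt wt]]]; do ?split=> //; apply/box_cons.
Qed.

Local Open Scope ereal_scope.

Lemma lebesgue_d_box n : lebesgue_d (box n) <= ((b - a) ^+ n)%:E.
Proof.
elim: n => [|n IH].
  by rewrite /lebesgue_d /= indicE lee_fin; case: (_ \in _).
rewrite exprSr; apply: lebesgue_d_le_sections => //.
- by rewrite exprn_ge0 // subr_ge0.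
- by move=> x t /box_cons[].
- by move=> x _; apply: le_trans IH; apply: le_lebesgue_d => t /box_cons[].
Qed.

Lemma lebesgue_d_slab_ord0 n c (w : 'I_n.+1 -> R) eta : (0 <= eta)%R ->
  w ord0 != 0%R -> (forall j, w (lift ord0 j) = 0%R) ->
  lebesgue_d (slab c w eta) <= ((b - a) ^+ n * (2 * eta / `|w ord0|))%:E.
Proof.
move=> eta0 w0 wz; have e0 : (0 <= eta / `|w ord0|)%R by rewrite divr_ge0.
have -> : (2 * eta / `|w ord0| = (- c / w ord0 + eta / `|w ord0|)
                                  - (- c / w ord0 - eta / `|w ord0|))%R.
  by field; rewrite normr_eq0 w0.
apply: (@lebesgue_d_le_sections R n _ ((b - a) ^+ n)%R).
- by rewrite exprn_ge0 // subr_ge0.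
- by lra.
- move=> x t /slab_cons[_ [_]] /=.
  rewrite big1 => [|j _]; last by rewrite wz mul0r.
  by rewrite addr0; exact: ler_norm_affine.
- move=> x _; apply: le_trans (lebesgue_d_box n).
  by apply: le_lebesgue_d => t /slab_cons[_ []].
Qed.

(* [i] must be the last index with a nonzero weight: [lebesgue_d] integrates
   the first coordinate outermost, so once the coordinates before [x_i] are
   fixed, the constraint on [x_i] must not involve those integrated inside. *)
Lemma lebesgue_d_slab n c (w : 'I_n -> R) eta (i : 'I_n) : (0 <= eta)%R ->
  w i != 0%R -> (forall j : 'I_n, (i < j)%N -> w j = 0%R) ->
  lebesgue_d (slab c w eta) <= ((b - a) ^+ n.-1 * (2 * eta / `|w i|))%:E.
Proof.
move=> eta0; elim: n c w i => [|n IH] c w i; first by case: i.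
case: (unliftP ord0 i) => [i' ->|->] wi wz; last first.
  by apply: lebesgue_d_slab_ord0 => // j; apply: wz.
have n_gt0 : (0 < n)%N := leq_ltn_trans (leq0n i') (ltn_ord i').
have -> : ((b - a) ^+ n.+1.-1 = (b - a) ^+ n.-1 * (b - a))%R.
  by rewrite -exprSr prednK.
rewrite mulrAC; apply: lebesgue_d_le_sections => //.
- by rewrite mulr_ge0 ?exprn_ge0 ?divr_ge0 ?mulr_ge0 ?subr_ge0.
- by move=> x t /slab_cons[].
move=> x _; apply: le_trans (IH (c + w ord0 * x)%R (fun j => w (lift ord0 j)) i' wi _).
  by apply: le_lebesgue_d => t /slab_cons[].
by move=> j ij; apply: wz; rewrite /= /bump /= !add1n ltnS.
Qed.
End box_slab.
Arguments box {R} a b n.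

Lemma lebesgue_d_slab_small (R : realType) (a b : R) n c (w : 'I_n -> R)
    (eps : R) : a < b -> c != 0 \/ (exists i, w i != 0) -> 0 < eps ->
  exists2 eta, 0 < eta & (lebesgue_d (slab a b c w eta) <= eps%:E)%E.
Proof.
move=> ab cw0 eps0; have [[i wi]|w0] := pselect (exists i, w i != 0).
  have [j wj jmax] := @arg_maxnP _ i (fun k => w k != 0) val wi.
  have wz (k : 'I_n) : (j < k)%N -> w k = 0.
    by move=> jk; apply/eqP; apply: contraTT jk => /jmax; rewrite -leqNgt.
  have ba_gt0 : 0 < (b - a) ^+ n.-1 by rewrite exprn_gt0 // subr_gt0.
  have wj_gt0 : 0 < `|w j| by rewrite normr_gt0.
  exists (eps * `|w j| / (2 * (b - a) ^+ n.-1)).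
    by rewrite divr_gt0 ?mulr_gt0.
  apply: le_trans (lebesgue_d_slab (ltW ab) _ _ wj wz) _.
    by rewrite ltW // divr_gt0 ?mulr_gt0.
  by rewrite lee_fin le_eqVlt; apply/orP; left; apply/eqP; field; rewrite !gt_eqF.
have c_gt0 : 0 < `|c| by rewrite normr_gt0; case: cw0.
exists (`|c| / 2); first by rewrite divr_gt0.
apply: le_trans (le_lebesgue_d (B := set0) _) _.
  move=> x [_] /=; rewrite big1 ?addr0 => [|k _]; first by lra.
  suff -> : w k = 0 by rewrite mul0r.
  by apply: contra_notP w0 => wk; exists k; apply/eqP.
by rewrite lebesgue_d_set0 lee_fin ltW.
Qed.

Section Iset.
Variables (R : realType) (d : nat) (a b : R).
Implicit Types u v : 'rV[R]_d.+1.

Definition affine_form u (x : d.-tuple R) : R :=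
  u 0 ord_max + \sum_(i < d) u 0 (widen_ord (leqnSn d) i) * tnth x i.

Definition affine_form_lipschitz : R := 1 + d%:R * (`|a| + `|b|).

Lemma affine_form_dist u v δ x : box a b d x -> ball v δ u ->
  `|affine_form u x - affine_form v x| <= δ * affine_form_lipschitz.
Proof.
move=> bx [_ uv].
have duv i : `|u 0 i - v 0 i| <= δ by rewrite distrC; exact/ltW/uv.
have xab i : `|tnth x i| <= `|a| + `|b|.
  have /andP[ax xb] := bx i; have := ler_norm a; have := ler_norm b.
  have := ler_norm (- a); have := ler_norm (- b); rewrite !normrN => *.
  by rewrite ler_norml; apply/andP; split; lra.
rewrite /affine_form /affine_form_lipschitz opprD addrACA -sumrB mulrDr mulr1.
apply: le_trans (ler_normD _ _) _; apply: lerD => //.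
rewrite mulr_natl mulrnAr -[in X in _ <= X](card_ord d) -sumr_const.
apply: le_trans (ler_norm_sum _ _ _) _; apply: ler_sum => i _.
by rewrite -mulrBl normrM ler_pM.
Qed.

Lemma Iset_symdiff_sub_slab u v δ : ball v δ u ->
  Iset a b u `+` Iset a b v `<=`
  slab a b (v 0 ord_max) (fun j => v 0 (widen_ord (leqnSn d) j))
       (δ * affine_form_lipschitz).
Proof.
move=> uv x.
have le0 w : ~ Iset a b w x -> box a b d x -> affine_form w x <= 0.
  by move=> NIw bx; rewrite leNgt; apply/negP => Lw; exact: NIw.
case=> [[[bx Lu] /le0/(_ bx) Lv] | [[bx Lv] /le0/(_ bx) Lu]]; split=> //=;
  have := affine_form_dist bx uv; rewrite -/(affine_form v x) !ler_norml.
- move=> /andP[? ?]; rewrite -/(affine_form u x) in Lu.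
  by apply/andP; split; lra.
- move=> /andP[? ?]; rewrite -/(affine_form v x) in Lv.
  by apply/andP; split; lra.
Qed.

Lemma row_neq0 v : v != 0 ->
  v 0 ord_max != 0 \/ exists i, v 0 (widen_ord (leqnSn d) i) != 0.
Proof.
move=> v0.
have [[i vi]|w0] := pselect (exists i, v 0 (widen_ord (leqnSn d) i) != 0).
  by right; exists i.
left; apply: contraNneq v0 => c0; apply/eqP/matrixP => i k.
rewrite (ord1 i) mxE; case: (unliftP ord_max k) => [j ->|->] //.
have -> : lift ord_max j = widen_ord (leqnSn d) j.
  by apply: val_inj; exact: lift_max.
by apply: contra_notP w0 => wj; exists j; apply/eqP.
Qed.

Lemma lebesgue_d_Iset_symdiff_near v (eps : R) :
  a < b -> v != 0 -> 0 < eps ->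
  \forall u \near v, (lebesgue_d (Iset a b u `+` Iset a b v) <= eps%:E)%E.
Proof.
move=> ab v0 eps0.
have [eta eta0 slab_small] := lebesgue_d_slab_small ab (row_neq0 v0) eps0.
have C_gt0 : 0 < affine_form_lipschitz.
  by rewrite ltr_pwDl // mulr_ge0 ?addr_ge0.
apply/nbhs_ballP; exists (eta / affine_form_lipschitz); first exact: divr_gt0.
move=> u /Iset_symdiff_sub_slab; rewrite divfK ?gt_eqF // => /le_lebesgue_d.
by move/le_trans; apply.
Qed.
End Iset.

Theorem lemma2p5 (R : realType) (d : nat) (a b : R) (v : 'rV[R]_(d.+1)) :
  a < b -> v != 0 ->
  limf_esup (fun u : 'rV[R]_(d.+1) =>
               lebesgue_d (Iset a b u `+` Iset a b v)) v^' = 0%E.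
Proof.
move=> ab v0; apply: limf_esup_eq0 => [|u|eps eps0].
- exact: dnbhs_proper v0.
- exact: lebesgue_d_ge0.
- exact/nbhs_dnbhs/lebesgue_d_Iset_symdiff_near.
Qed.
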